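(* Let $\mathcal{H}$ be a hypertree whose basic sets are $B_1,\dots,B_m$, and let $T$ be a tree with vertex set $V(\mathcal{H})$. Then $T$ is a host tree of $\mathcal{H}$ if and only if $E(T)=\bigcup_{i=1}^m E_i$, where $E_i$ is $B_i$-admissible for each $1\le i\le m$.
   Context: A hypergraph $\mathcal{H}$ has a finite vertex set $V(\mathcal{H})$ and a finite family of nonempty subsets (edges). A host tree is a tree on $V(\mathcal{H})$ in which every edge induces a connected subgraph; a hypertree is a hypergraph with a host tree. For $V'\subseteq V(\mathcal{H})$, $I_\mathcal{H}(V')$ is the intersection of all edges containing $V'$, or $V(\mathcal{H})$ if none does. For $A\subseteq V(\mathcal{H})$, $\overline{\mathcal{H}_A}$ is the hypergraph on $V(\mathcal{H})$ whose edges are the edges of $\mathcal{H}$ not containing $A$. The 2-section of a hypergraph is the graph on its vertices where two distinct vertices are adjacent iff some edge contains both. A union of sets is connected if the intersection graph of the sets is connected. $Comp(\mathcal{H})$ is the hypergraph without repeated edges on $V(\mathcal{H})$ whose edges are $V(\mathcal{H})$, all singletons, and all proper subsets obtainable from edges of $\mathcal{H}$ by repeated nonempty intersections and connected unions; a basic set is an edge of $Comp(\mathcal{H})$ with more than one vertex that is not a connected union of strictly smaller edges of $Comp(\mathcal{H})$. For a basic set $B$: $A(B)$ is the set of connected components of the 2-section of $\overline{\mathcal{H}_B}$ that contain at least one vertex of $B$; $\Delta(B)$ is the set of pairs $uv$ with $u,v\in B$ lying in different connected components of the 2-section of $\overline{\mathcal{H}_B}$. A collection $E\subseteq\Delta(B)$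 is $B$-admissible if the graph $\Gamma_{B,E}$ with vertex set $A(B)$, having for each $e\in E$ an edge between the components of $A(B)$ containing the two endpoints of $e$, is a tree. *)

(* Hypergraphs on a finite vertex type V (V(H) = all of V). *)
From mathcomp Require Import all_boot.
Set Implicit Arguments.
Unset Strict Implicit.
Unset Printing Implicit Defensive.

(* A hypergraph on V: a family of nonempty subsets of V (repetitions of edges
   are irrelevant for every notion below, so a set of sets is used). *)
Definition hypergraph (V : finType) (H : {set {set V}}) : Prop := set0 \notin H.

(* Multigraph whose edges are the 2-sets e in E, the edge e = {u,v} joining
   f u and f v (f maps underlying points to vertices). *)
Definition medge (V W : finType) (f : V -> W) (E : {set {set V}}) : rel W :=
  fun x y => [exists e in E, [exists u in e, [exists v in e,
               (u != v) && (f u == x) && (f v == y)]]].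

(* Tree on vertex set X: connected, and every edge is a bridge
   (i.e. minimally connected; parallel edges are therefore excluded). *)
Definition is_mtree (V W : finType) (f : V -> W) (X : {set W})
    (E : {set {set V}}) : Prop :=
  (forall x y, x \in X -> y \in X -> connect (medge f E) x y) /\
  (forall e u v, e \in E -> u \in e -> v \in e -> u != v ->
     ~~ connect (medge f (E :\ e)) (f u) (f v)).

Definition is_tree (V : finType) (T : {set {set V}}) : Prop :=
  (forall e, e \in T -> #|e| = 2) /\ is_mtree id [set: V] T.

Definition host_tree (V : finType) (H T : {set {set V}}) : Prop :=
  is_tree T /\
  forall F, F \in H -> forall x y, x \in F -> y \in F ->
    connect (medge id [set e in T | e \subset F]) x y.

Definition hypertree (V : finType) (H : {set {set V}}) : Prop :=
  hypergraph H /\ exists T, host_tree H T.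

Definition inter_rel (V : finType) (S : {set {set V}}) : rel {set V} :=
  fun X Y => [&& X \in S, Y \in S & X :&: Y != set0].

Definition conn_family (V : finType) (S : {set {set V}}) : Prop :=
  S != set0 /\ forall X Y, X \in S -> Y \in S -> connect (inter_rel S) X Y.

Inductive obtainable (V : finType) (H : {set {set V}}) : {set V} -> Prop :=
| obt_edge F : F \in H -> obtainable H F
| obt_cap A B : obtainable H A -> obtainable H B -> A :&: B != set0 ->
    obtainable H (A :&: B)
| obt_cup (S : {set {set V}}) : (forall X, X \in S -> obtainable H X) ->
    conn_family S -> obtainable H (\bigcup_(X in S) X).

Definition comp_edge (V : finType) (H : {set {set V}}) (A : {set V}) : Prop :=
  A = [set: V] \/ #|A| = 1 \/ (obtainable H A /\ A \proper [set: V]).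

Definition basic (V : finType) (H : {set {set V}}) (B : {set V}) : Prop :=
  comp_edge H B /\ 1 < #|B| /\
  ~ (exists S : {set {set V}},
       (forall X, X \in S -> comp_edge H X /\ X \proper B) /\
       conn_family S /\ \bigcup_(X in S) X = B).

(* 2-section of the hypergraph \overline{H_B} (edges of H not containing B). *)
Definition adjB (V : finType) (H : {set {set V}}) (B : {set V}) : rel V :=
  fun u v => (u != v) &&
    [exists F in H, [&& ~~ (B \subset F), u \in F & v \in F]].

Definition compB (V : finType) (H : {set {set V}}) (B : {set V}) (x : V)
  : {set V} := [set y | connect (adjB H B) x y].

Definition AB (V : finType) (H : {set {set V}}) (B : {set V}) : {set {set V}} :=
  [set compB H B x | x in B].

Definition DeltaB (V : finType) (H : {set {set V}}) (B : {set V})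
  : {set {set V}} :=
  [set [set u; v] | u in B, v in B & ~~ connect (adjB H B) u v].

Definition admissible (V : finType) (H : {set {set V}}) (B : {set V})
    (E : {set {set V}}) : Prop :=
  E \subset DeltaB H B /\ is_mtree (compB H B) (AB H B) E.

From mathcomp Require Import all_boot.
From Stdlib Require Import Classical.
Set Implicit Arguments.
Unset Strict Implicit.
Unset Printing Implicit Defensive.

(* Every edge X of Comp(H) induces a subtree of any host tree T; equivalently
   X is convex, i.e. contains each edge of T separating two points of X, since
   convex sets are closed under intersection and subtrees under connected unions.

   If T is a host tree, the edges of T in Delta(B) form a B-admissible set:
   Gamma is connected because B is a subtree of T, and an edge uv in Delta(B)
   lies in no edge of H missing B, so every path of Gamma avoiding uv lifts to
   a path of T avoiding uv.  Each edge uv of T lies in Delta(B) for a minimal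
   edge B of Comp(H) containing u and v, and such a B is basic.

   Conversely, if T is a union of admissible sets, induction on |X| shows that
   every edge X of Comp(H) is a subtree of T.  A non-basic X is a connected
   union of smaller ones.  For a basic X, convexity of X in some host tree
   joins two points of one component of A(X) by a chain of smaller edges
   F :&: X of Comp(H), and the tree Gamma_{X,E} joins the components. *)

Lemma connect_ind (W : finType) (e : rel W) (P : W -> Prop) x y :
  P x -> (forall a b, P a -> e a b -> P b) -> connect e x y -> P y.
Proof.
move=> Px step /connectP [p + ->]; elim: p x Px => [|z p IH] x Px //= /andP [exz].
exact/IH/(step _ _ Px exz).
Qed.

Lemma homo_connect (W U : finType) (e : rel W) (f : W -> U) (e' : rel U) x y :
  (forall a b, e a b -> connect e' (f a) (f b)) ->
  connect e x y -> connect e' (f x) (f y).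
Proof.
move=> fe; apply: (connect_ind (P := fun z => connect e' (f x) (f z))) => // a b xa /fe.
exact: connect_trans.
Qed.

Lemma connect_bigcup (W : finType) (e : rel W) (S : {set {set W}}) :
  conn_family S -> (forall Y, Y \in S -> {in Y &, forall a b, connect e a b}) ->
  {in \bigcup_(Y in S) Y &, forall a b, connect e a b}.
Proof.
move=> [_ connS] connY a b /bigcupP [Ya YaS aYa] /bigcupP [Yb YbS bYb].
pose P Z := Z \in S /\ {in Z, forall z, connect e a z}.
suff [_] : P Yb by apply.
apply: (connect_ind (P := P) _ _ (connS _ _ YaS YbS)) => [|Z Z' [ZS aZ]].
  by split=> // z; apply: connY.
case/and3P=> _ Z'S /set0Pn [w]; rewrite inE => /andP [wZ wZ'].
by split=> // z zZ'; apply: connect_trans (aZ w wZ) (connY _ Z'S _ _ wZ' zZ').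
Qed.

Section MultiGraph.
Variables (V W : finType) (f : V -> W).
Implicit Types E : {set {set V}}.

Lemma medgeP E x y : medge f E x y ->
  exists t u v, [/\ t \in E, u \in t, v \in t, u != v & f u = x /\ f v = y].
Proof.
case/exists_inP=> t tE /exists_inP [u ut /exists_inP [v vt]].
by case/andP=> /andP [uv /eqP fu] /eqP fv; exists t, u, v.
Qed.

Lemma medge_step E t u v :
  t \in E -> u \in t -> v \in t -> u != v -> medge f E (f u) (f v).
Proof.
move=> tE ut vt uv; apply/exists_inP; exists t => //.
by apply/exists_inP; exists u => //; apply/exists_inP; exists v; rewrite ?uv ?eqxx.
Qed.

Lemma medge_sym E : symmetric (medge f E).
Proof.
move=> x y; apply/idP/idP => /medgeP [t [u [v [tE ut vt uv [<- <-]]]]];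
  by apply: medge_step vt ut _; rewrite // eq_sym.
Qed.

Lemma connect_medge_sym E : connect_sym (medge f E).
Proof. exact/sym_connect_sym/medge_sym. Qed.

Lemma connect_medge_sub E E' x y :
  E \subset E' -> connect (medge f E) x y -> connect (medge f E') x y.
Proof.
move=> sEE'; apply: connect_sub => {}x {}y /medgeP [t [u [v [tE ut vt uv [<- <-]]]]].
exact/connect1/(medge_step (subsetP sEE' t tE)).
Qed.

Lemma connect_medge_lift (X : {set V}) E (r : rel V) a b :
  {in X &, forall x y, f x = f y -> connect r x y} ->
  (forall t u v, t \in E -> u \in t -> v \in t -> u != v ->
     [/\ u \in X, v \in X & r u v]) ->
  a \in X -> b \in X -> connect (medge f E) (f a) (f b) -> connect r a b.
Proof.
move=> fiber step aX bX fab.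
pose P z := exists2 w, w \in X & z = f w /\ connect r a w.
have [w wX [fbw aw]] : P (f b).
  apply: (connect_ind (P := P) _ _ fab) => [|z z' [w wX [-> aw]]]; first by exists a.
  case/medgeP=> t [u [v [tE ut vt uv [fwu <-]]]].
  have [uX vX ruv] := step t u v tE ut vt uv.
  exists v => //; split=> //.
  exact: connect_trans aw (connect_trans (fiber _ _ wX uX (esym fwu)) (connect1 ruv)).
exact: connect_trans aw (fiber _ _ wX bX (esym fbw)).
Qed.

End MultiGraph.

Lemma medge_id_neq (V : finType) (E : {set {set V}}) a b : medge id E a b -> a != b.
Proof. by case/medgeP=> t [u [v [_ _ _ uv [<- <-]]]]. Qed.

Lemma medge_setD1 (V : finType) (E : {set {set V}}) (t : {set V}) a b :
  medge id E a b -> ~~ ((a \in t) && (b \in t)) -> medge id (E :\ t) a b.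
Proof.
case/medgeP=> t' [u [v [t'E ut' vt' uv [<- <-]]]] /= tNuv.
have t'Et : t' \in E :\ t.
  by rewrite !inE t'E andbT; apply: contraNneq tNuv => <-; rewrite ut' vt'.
exact: (@medge_step _ _ id _ t').
Qed.

Section Trees.
Variable V : finType.
Implicit Types (T : {set {set V}}) (t X Y : {set V}).

Definition separates T t x y := ~~ connect (medge id (T :\ t)) x y.

Lemma tree_edge_sep T t u v :
  is_tree T -> t \in T -> u \in t -> v \in t -> u != v -> separates T t u v.
Proof. by case=> _ [_]; apply. Qed.

Lemma tree_edgeE T t u v :
  is_tree T -> t \in T -> u \in t -> v \in t -> u != v -> t = [set u; v].
Proof.
move=> [Tcard _] tT ut vt uv; apply/eqP; rewrite eq_sym eqEcard cards2 uv Tcard //.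
by rewrite andbT; apply/subsetP => z; rewrite !inE => /orP [] /eqP ->.
Qed.

Definition sep_step T x y : rel V :=
  fun a b => [forall t in T, (a \in t) && (b \in t) ==> separates T t x y].

Lemma tree_path_sep T x p : is_tree T -> uniq (x :: p) ->
  path (medge id T) x p -> path (sep_step T x (last x p)) x p.
Proof.
move=> Ttr; elim: p x => [|z p IH] x //= /andP [xNzp uzp] /andP [xTz pth].
set y := last z p.
have pNx c : c \in z :: p -> c != x by move=> cp; apply: contraNneq xNzp => <-.
have xNt t c d : t \in T -> c \in z :: p -> d \in z :: p -> c != d ->
    c \in t -> d \in t -> x \notin t.
  move=> tT cp dp cd ct dt; apply/negP => xt.
  suff : 2 < #|t| by rewrite Ttr.1.
  apply/card_gt2P; exists c, d, x; split; split=> //; first exact: pNx.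
  by rewrite eq_sym pNx.
have zy_avoid t : t \in T -> x \in t -> connect (medge id (T :\ t)) z y.
  move=> tT xt; apply/connectP; exists p => //.
  apply: (sub_in_path (P := [in z :: p]) _ (allss _) pth) => c d cp dp cd.
  apply: (medge_setD1 cd); apply/andP => -[ct dt].
  by rewrite (negbTE (xNt t c d tT cp dp (medge_id_neq cd) ct dt)) in xt.
have xz_avoid t : x \notin t -> medge id (T :\ t) x z.
  by move=> xNt'; apply: medge_setD1 xTz _; rewrite (negbTE xNt').
apply/andP; split.
  apply/forall_inP => t tT; apply/implyP => /andP [xt zt]; apply/negP => xy.
  have xz : x != z by rewrite eq_sym pNx ?mem_head.
  move/negP: (tree_edge_sep Ttr tT xt zt xz); apply.
  by apply: connect_trans xy _; rewrite connect_medge_sym; apply: zy_avoid.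
have : path [rel a b | medge id T a b && sep_step T z y a b] z p.
  by rewrite path_relI pth IH.
apply: (sub_in_path (P := [in z :: p]) _ (allss _)) => c d cp dp /andP [cd sep].
apply/forall_inP => t tT; apply/implyP => /andP [ct dt]; apply/negP => xy.
move: sep => /forall_inP /(_ t tT); rewrite ct dt => /negP; apply.
apply: connect_trans _ xy; rewrite connect_medge_sym; apply: connect1.
exact/xz_avoid/(xNt t c d tT cp dp (medge_id_neq cd)).
Qed.

Lemma tree_connect_sep (U : finType) (f : V -> U) (r : rel U) T x y : is_tree T ->
  (forall t a b, t \in T -> a \in t -> b \in t -> a != b ->
     separates T t x y -> connect r (f a) (f b)) ->
  connect r (f x) (f y).
Proof.
move=> Ttr; have /connectP [p pth ->] := Ttr.2.1 x y (in_setT x) (in_setT y).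
case: (shortenP pth) => q pthq uq _ step.
apply: (homo_connect (e := [rel a b | medge id T a b && sep_step T x (last x q) a b])).
  move=> a b /andP [/medgeP [t [u [v [tT ut vt uv [/= <- <-]]]]] /forall_inP /(_ t tT)].
  by rewrite ut vt /=; apply: step.
by apply/connectP; exists q; rewrite // path_relI pthq tree_path_sep.
Qed.

Definition edges_in T X := [set t in T | t \subset X].

Definition subtree T X :=
  {in X &, forall x y, connect (medge id (edges_in T X)) x y}.

Definition convex T X :=
  forall t x y, t \in T -> x \in X -> y \in X -> separates T t x y -> t \subset X.

Lemma edges_inS T X Y : X \subset Y -> edges_in T X \subset edges_in T Y.
Proof.
by move=> sXY; apply/subsetP => t; rewrite !inE => /andP [-> /subset_trans ->].
Qed.

Lemma subtree_setD1 T X t : subtree T X -> ~~ (t \subset X) ->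
  {in X &, forall x y, connect (medge id (T :\ t)) x y}.
Proof.
move=> sX tNX x y xX yX; apply: connect_medge_sub (sX x y xX yX).
apply/subsetP => t'; rewrite !inE => /andP [-> t'X]; rewrite andbT.
by apply: contraNneq tNX => <-.
Qed.

Lemma subtree_convex T X : subtree T X -> convex T X.
Proof.
move=> sX t x y _ xX yX; apply: contraLR => tNX.
by rewrite negbK; apply: subtree_setD1 sX tNX x y xX yX.
Qed.

Lemma convex_subtree T X : is_tree T -> convex T X -> subtree T X.
Proof.
move=> Ttr cX x y xX yX.
apply: (tree_connect_sep (f := id)) Ttr _ => t a b tT a_t b_t ab sep.
by apply/connect1/(@medge_step _ _ id _ t) => //; rewrite inE tT (cX t x y).
Qed.

Lemma subtree_card_le1 T X : #|X| <= 1 -> subtree T X.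
Proof. by move=> /card_le1_eqP X1 x y xX yX; rewrite (X1 x y xX yX) connect0. Qed.

Lemma convexI T X Y : convex T X -> convex T Y -> convex T (X :&: Y).
Proof.
move=> cX cY t x y tT; rewrite !inE => /andP [xX xY] /andP [yX yY] sep.
by rewrite subsetI (cX t x y) // (cY t x y).
Qed.

Lemma subtree_bigcup T (S : {set {set V}}) : conn_family S ->
  (forall Y, Y \in S -> subtree T Y) -> subtree T (\bigcup_(Y in S) Y).
Proof.
move=> cS sS; rewrite /subtree; apply: connect_bigcup cS _ => Y YS x y xY yY.
exact/(connect_medge_sub (edges_inS _ (bigcup_sup Y YS)))/sS.
Qed.

End Trees.

Section Hypertrees.
Variable V : finType.
Implicit Types (H T E : {set {set V}}) (t B F X Y : {set V}).

Lemma adjB_sym H B : symmetric (adjB H B).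
Proof.
move=> x y; rewrite /adjB eq_sym; congr (_ && _).
by apply/exists_inP/exists_inP => -[F FH /and3P [BNF xF yF]];
  exists F; rewrite ?BNF ?xF ?yF.
Qed.

Lemma connect_adjB_sym H B : connect_sym (adjB H B).
Proof. exact/sym_connect_sym/adjB_sym. Qed.

Lemma eq_compB H B a b : compB H B a = compB H B b <-> connect (adjB H B) a b.
Proof.
split=> ab.
  have : b \in compB H B b by rewrite inE connect0.
  by rewrite -ab inE.
apply/setP => y; rewrite !inE; apply/idP/idP; last exact: connect_trans.
by apply: connect_trans; rewrite connect_adjB_sym.
Qed.

Lemma DeltaBP H B t : reflect
  (exists u v, [/\ u \in B, v \in B, ~~ connect (adjB H B) u v & t = [set u; v]])
  (t \in DeltaB H B).
Proof.
apply: (iffP imset2P) => [[u v uB] | [u [v [uB vB uNv ->]]]].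
  by rewrite inE => /andP [vB uNv] ->; exists u, v.
by exists u v; rewrite ?inE ?vB.
Qed.

Lemma mem_DeltaB H B u v : u \in B -> v \in B -> ~~ connect (adjB H B) u v ->
  [set u; v] \in DeltaB H B.
Proof. by move=> uB vB uNv; apply/DeltaBP; exists u, v. Qed.

Lemma DeltaB_sub H B t : t \in DeltaB H B -> t \subset B.
Proof.
by case/DeltaBP=> u [v [uB vB _ ->]]; apply/subsetP => z; rewrite !inE => /orP [] /eqP ->.
Qed.

Lemma DeltaB_nconn H B t u v : t \in DeltaB H B -> u \in t -> v \in t -> u != v ->
  ~~ connect (adjB H B) u v.
Proof.
case/DeltaBP=> a [b [_ _ aNb ->]]; rewrite !inE.
by case/orP=> /eqP-> /orP [] /eqP->; rewrite ?eqxx // connect_adjB_sym.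
Qed.

Lemma comp_edge_of_edge H F : F \in H -> comp_edge H F.
Proof.
move=> FH; have [-> | FNT] := eqVneq F setT; first by left.
by right; right; split; [exact: obt_edge | rewrite properT].
Qed.

Lemma comp_edgeI H X F :
  comp_edge H X -> F \in H -> F :&: X != set0 -> comp_edge H (F :&: X).
Proof.
move=> [-> | [X1 | [oX XT]]] FH FX.
- by rewrite setIT; apply: comp_edge_of_edge.
- right; left; apply/eqP; rewrite eqn_leq -{1}X1 subset_leq_card ?subsetIr //.
  by rewrite card_gt0.
- right; right; split; first exact/obt_cap/FX/oX/obt_edge.
  exact: sub_proper_trans (subsetIr F X) XT.
Qed.

Lemma obtainable_convex H T X : host_tree H T -> obtainable H X -> convex T X.
Proof.
move=> [Ttr hT]; elim=> {X} [F FH | A B _ cA _ cB _ | S _ IH cS].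
- by apply: subtree_convex => x y; apply: hT.
- exact: convexI.
- by apply/subtree_convex/subtree_bigcup => // Y YS; apply/convex_subtree/IH.
Qed.

Lemma comp_edge_convex H T X : host_tree H T -> comp_edge H X -> convex T X.
Proof.
move=> hT [-> | [X1 | [oX _]]]; last exact: obtainable_convex oX.
  by move=> *; apply: subsetT.
by apply/subtree_convex/subtree_card_le1; rewrite X1.
Qed.

Lemma connect_adjB_setD1 H T B t a b : host_tree H T ->
  (forall F, F \in H -> ~~ (B \subset F) -> ~~ (t \subset F)) ->
  connect (adjB H B) a b -> connect (medge id (T :\ t)) a b.
Proof.
move=> [_ hT] tNF; apply: connect_sub => x y.
case/andP=> _ /exists_inP [F FH /and3P [BNF xF yF]].
exact: (subtree_setD1 (hT F FH) (tNF F FH BNF)).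
Qed.

Lemma adjB_separating_edge H T B t x y : host_tree H T ->
  connect (adjB H B) x y -> separates T t x y ->
  exists2 F, F \in H & ~~ (B \subset F) && (t \subset F).
Proof.
move=> hT xy /negP sep; apply: NNPP => noF; apply: sep.
apply: connect_adjB_setD1 hT _ xy => F FH BNF; apply/negP => tF.
by apply: noF; exists F; rewrite ?BNF.
Qed.

Lemma connect_adjB_convex H T X (r : rel V) c d : host_tree H T -> convex T X ->
  (forall F a b, F \in H -> ~~ (X \subset F) ->
     a \in F :&: X -> b \in F :&: X -> connect r a b) ->
  c \in X -> d \in X -> connect (adjB H X) c d -> connect r c d.
Proof.
move=> hT cvX step cX dX cd.
apply: (tree_connect_sep (f := id)) hT.1 _ => t a b tT a_t b_t _ sep.
have [F FH /andP [XNF tF]] := adjB_separating_edge hT cd sep.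
have tX := cvX t c d tT cX dX sep.
by apply: (step F) => //; rewrite inE (subsetP tF) ?(subsetP tX).
Qed.

Lemma host_tree_Gamma_connected H T B : host_tree H T -> comp_edge H B ->
  {in AB H B &, forall P Q, connect (medge (compB H B) (T :&: DeltaB H B)) P Q}.
Proof.
move=> hT cB _ _ /imsetP [a aB ->] /imsetP [b bB ->].
apply: tree_connect_sep hT.1 _ => t u v tT ut vt uv sep.
have tB := comp_edge_convex hT cB tT aB bB sep.
have [/eq_compB -> | uNv] := boolP (connect (adjB H B) u v); first exact: connect0.
have tTD : t \in T :&: DeltaB H B.
  by rewrite inE tT (tree_edgeE hT.1 tT ut vt uv) mem_DeltaB ?(subsetP tB).
by apply: connect1; apply: medge_step tTD ut vt uv.
Qed.

Lemma host_tree_Gamma_bridge H T B t u v : host_tree H T ->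
  t \in T :&: DeltaB H B -> u \in t -> v \in t -> u != v ->
  ~~ connect (medge (compB H B) ((T :&: DeltaB H B) :\ t)) (compB H B u) (compB H B v).
Proof.
move=> hT; rewrite inE => /andP [tT tD] ut vt uv; apply/negP => cuv.
have tNF F : F \in H -> ~~ (B \subset F) -> ~~ (t \subset F).
  move=> FH BNF; apply/negP => tF; move/negP: (DeltaB_nconn tD ut vt uv); apply.
  apply/connect1/andP; split=> //; apply/exists_inP; exists F => //.
  by rewrite BNF !(subsetP tF).
move/negP: (tree_edge_sep hT.1 tT ut vt uv); apply.
apply: (connect_medge_lift (X := setT)) cuv => // [x y _ _ /eq_compB | t' x y].
  exact: connect_adjB_setD1.
rewrite !inE => /andP [t't /andP [t'T _]] xt' yt' xy; split=> //.
by apply: (@medge_step _ _ id _ t'); rewrite ?inE ?t't.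
Qed.

Lemma host_tree_admissible H T B : host_tree H T -> comp_edge H B ->
  admissible H B (T :&: DeltaB H B).
Proof.
move=> hT cB; split; first exact: subsetIr.
by split=> [|t u v]; [apply: host_tree_Gamma_connected | apply: host_tree_Gamma_bridge].
Qed.

Lemma exists_minimal (P : {set V} -> Prop) X :
  P X -> exists B, P B /\ forall Y, P Y -> ~ Y \proper B.
Proof.
have [n] := ubnP #|X|; elim: n X => // n IH X; rewrite ltnS => Xn PX.
have [[Y [PY YX]] | minX] := classic (exists Y, P Y /\ Y \proper X).
  exact: IH (leq_trans (proper_card YX) Xn) PY.
by exists X; split=> // Y PY YX; apply: minX; exists Y.
Qed.

Section MinimalCompEdge.
Variables (H T : {set {set V}}) (t B : {set V}) (u v : V).
Hypotheses (hT : host_tree H T) (tT : t \in T).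
Hypotheses (ut : u \in t) (vt : v \in t) (uv : u != v).
Hypotheses (cB : comp_edge H B) (uB : u \in B) (vB : v \in B).
Hypothesis minB : forall Y, [/\ comp_edge H Y, u \in Y & v \in Y] -> ~ Y \proper B.

Lemma minimal_comp_edge_basic : basic H B.
Proof.
split=> //; split; first by apply/card_gt1P; exists u, v.
case=> S [sS [cS SB]].
have [[Y YS [uY vY]] | noY] := classic (exists2 Y, Y \in S & u \in Y /\ v \in Y).
  by have [cY YB] := sS Y YS; apply: (minB (And3 cY uY vY)).
have tNY Y : Y \in S -> ~~ (t \subset Y).
  by move=> YS; apply/negP => tY; apply: noY; exists Y; rewrite ?(subsetP tY).
move/negP: (tree_edge_sep hT.1 tT ut vt uv); apply.
apply: (connect_bigcup cS); rewrite ?SB // => Y YS.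
exact/(subtree_setD1 _ (tNY Y YS))/convex_subtree/(comp_edge_convex hT (sS Y YS).1)/hT.1.
Qed.

Lemma minimal_comp_edge_DeltaB : t \in DeltaB H B.
Proof.
rewrite (tree_edgeE hT.1 tT ut vt uv) mem_DeltaB //; apply/negP => cuv.
have := adjB_separating_edge hT cuv (tree_edge_sep hT.1 tT ut vt uv).
case=> F FH /andP [BNF tF].
have uFB : u \in F :&: B by rewrite inE (subsetP tF) ?uB.
apply: (minB (Y := F :&: B)); last exact: properIr.
split=> //; last by rewrite inE (subsetP tF) ?vB.
by apply: comp_edgeI cB FH _; apply/set0Pn; exists u.
Qed.

End MinimalCompEdge.

Lemma host_tree_edge_DeltaB H T t : host_tree H T -> t \in T ->
  exists B, basic H B /\ t \in DeltaB H B.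
Proof.
move=> hT tT; have /cards2P [u [v [uv tE]]] : #|t| == 2 by rewrite hT.1.1.
have ut : u \in t by rewrite tE set21.
have vt : v \in t by rewrite tE set22.
pose P Y := [/\ comp_edge H Y, u \in Y & v \in Y].
have PT : P setT by split; [left | exact: in_setT | exact: in_setT].
have [B [[cB uB vB] minB]] := exists_minimal PT.
exists B; split; first exact: minimal_comp_edge_basic hT tT ut vt uv cB uB vB minB.
exact: minimal_comp_edge_DeltaB hT tT ut vt uv cB uB vB minB.
Qed.

Lemma basic_subtree H T0 T X E : host_tree H T0 -> basic H X -> admissible H X E ->
  E \subset T -> (forall Y, comp_edge H Y -> Y \proper X -> subtree T Y) -> subtree T X.
Proof.
move=> hT0 [cX _] [ED [Gconn _]] ET IH a b aX bX.
have inside : {in X &, forall c d, connect (adjB H X) c d ->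
                 connect (medge id (edges_in T X)) c d}.
  move=> c d cX' dX; apply: connect_adjB_convex hT0 (comp_edge_convex hT0 cX) _ cX' dX.
  move=> F x y FH XNF xFX yFX; apply: connect_medge_sub (edges_inS _ (subsetIr F X)) _.
  have cFX : comp_edge H (F :&: X) by apply: comp_edgeI cX FH _; apply/set0Pn; exists x.
  exact: IH cFX (properIr XNF) x y xFX yFX.
have Gab := Gconn _ _ (imset_f (compB H X) aX) (imset_f (compB H X) bX).
apply: (connect_medge_lift (X := X)) aX bX Gab.
- by move=> c d cX' dX /eq_compB; apply: inside.
- move=> t u v tE ut vt uv; have tX := DeltaB_sub (subsetP ED t tE).
  split; rewrite ?(subsetP tX) //.
  by apply: (@medge_step _ _ id _ t); rewrite ?inE ?(subsetP ET t tE).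
Qed.

Lemma comp_edge_subtree H T0 T (Es : {set V} -> {set {set V}}) X :
  host_tree H T0 -> (forall B, basic H B -> admissible H B (Es B)) ->
  (forall B, basic H B -> Es B \subset T) -> comp_edge H X -> subtree T X.
Proof.
move=> hT0 adm EsT; have [n] := ubnP #|X|; elim: n X => // n IH X.
rewrite ltnS => Xn cX.
have IHX Y : comp_edge H Y -> Y \proper X -> subtree T Y.
  by move=> cY YX; apply: IH cY; apply: leq_trans (proper_card YX) Xn.
have [X1 | X2] := leqP #|X| 1; first exact: subtree_card_le1.
have [[S [sS [cS <-]]] | nd] := classic (exists S : {set {set V}},
    (forall Y, Y \in S -> comp_edge H Y /\ Y \proper X) /\
    conn_family S /\ \bigcup_(Y in S) Y = X).
  by apply: subtree_bigcup cS _ => Y /sS [cY YX]; apply: IHX.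
have bX : basic H X by [].
exact: basic_subtree hT0 bX (adm X bX) (EsT X bX) IHX.
Qed.

End Hypertrees.

Theorem mainTheorem16 (V : finType) (H T : {set {set V}}) :
  hypertree H -> is_tree T ->
  (host_tree H T <->
   exists Es : {set V} -> {set {set V}},
     (forall B, basic H B -> admissible H B (Es B)) /\
     (forall e, e \in T <-> exists B, basic H B /\ e \in Es B)).
Proof.
move=> [_ [T0 hT0]] Ttr; split=> [hT | [Es [adm Tiff]]].
  exists (fun B => T :&: DeltaB H B); split=> [B [cB _] | t].
    exact: host_tree_admissible.
  split=> [tT | [B [_]]]; last by rewrite inE => /andP [].
  have [B [bB tD]] := host_tree_edge_DeltaB hT tT.
  by exists B; rewrite inE tT.
split=> // F FH; apply: (comp_edge_subtree hT0 adm) (comp_edge_of_edge FH).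
by move=> B bB; apply/subsetP => t tE; apply/Tiff; exists B.
Qed.
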